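(* Let $\delta\in(0,1]$, $\varepsilon>0$, and let $G=(V,E)$ be a simple graph on $n$ vertices with minimal degree at least $\delta n$. Let $V=V_1\sqcup\dots\sqcup V_k$ be an $(\varepsilon,\delta,n^{1.5})$-good decomposition of $G$ with parameter $\theta$, and let $X$ be the simple random walk on $G$. Then for any $C>0$, any $i\in[k]$ and any $v\in V$, \[ \Pr_v\left(\exists t\in[1,C\sqrt n]: X_t\in V_i,\ X_{t+1}\notin V_i\right)\le\frac{C\theta^2\varepsilon^9}{\delta^2}. \] Furthermore, for any $C>0$ and $i\in[k]$ there exists a set $V_i'\subseteq V_i$ with $|V_i'|\ge\delta^4n/80$ such that for every $v\in V_i'$, \[ \Pr_v\left(X[0,C\sqrt n]\subseteq V_i\right)\ge 1-\frac{80C\theta^2\varepsilon^9}{\delta^6}. \]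
   Context: $\deg(v,U)$ is the number of edges between $v$ and $U$, $E(A,B)$ the set of edges between $A$ and $B$, $G[U]$ the induced subgraph, and the spectral gap of a graph is $1-\lambda_2$ for the transition matrix of its simple random walk. For $\varepsilon\in(0,1)$, $\delta\in(0,1]$, $\beta>0$ and $G$ on $n$ vertices with minimal degree at least $\delta n$, a partition $V=V_1\sqcup\dots\sqcup V_k$ is an $(\varepsilon,\delta,\beta)$-good decomposition with parameter $\theta$ if $\theta\in[\varepsilon^{11\cdot 2^{2/\delta}},\varepsilon]$ and for every $i\in[k]$: (1) $k\le 2/\delta$; (2) $|V_i|\ge\delta n/2$; (3) the spectral gap of $G[V_i]$ is at least $\frac{\delta^{15}\theta\beta}{2^{31}n^2}$; (4) $\deg(v,V_i)\ge\delta^4n/40$ for all $v\in V_i$; (5) $|E(V_i,V\setminus V_i)|\le\varepsilon^9\theta^2\beta$. $X[a,b]$ denotes $\{X_j: j\in[\lceil a\rceil,\lfloor b\rfloor]\cap\mathbb N\}$ and $\Pr_v$ refers to the walk started at $v$. *)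

From HB Require Import structures.
From mathcomp Require Import all_boot all_order all_algebra.
From mathcomp Require Import reals exp.
Set Implicit Arguments. Unset Strict Implicit. Unset Printing Implicit Defensive.
Import Order.TTheory GRing.Theory Num.Theory.
Local Open Scope ring_scope.

Definition simple_graph (T : finType) (e : rel T) : Prop :=
  symmetric e /\ irreflexive e.

Definition degU (T : finType) (e : rel T) (v : T) (U : {set T}) : nat :=
  #|[set u in U | e v u]|.

Definition cut_size (T : finType) (e : rel T) (A : {set T}) : nat :=
  #|[set p : T * T | [&& p.1 \in A, p.2 \notin A & e p.1 p.2]]|.

Definition rw_mx (R : realType) (T : finType) (e : rel T) (U : {set T})
  : 'M[R]_#|U| :=
  \matrix_(i, j) ((e (enum_val i) (enum_val j))%:R
                  / (degU e (enum_val i) U)%:R).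

(* The spectral gap 1 - lambda_2 of G[U] is at least g: the eigenvalues of the
   transition matrix (roots of its characteristic polynomial, with
   multiplicity, listed in nonincreasing order as s) satisfy g <= 1 - s_2. *)
Definition spectral_gap_ge (R : realType) (T : finType) (e : rel T)
  (U : {set T}) (g : R) : Prop :=
  exists s : seq R,
    [/\ sorted (fun x y => y <= x) s,
        char_poly (rw_mx R e U) = \prod_(mu <- s) ('X - mu%:P)
      & g <= 1 - s`_1].

Definition good_decomposition (R : realType) (T : finType) (e : rel T)
  (eps delta beta : R) (k : nat) (P : 'I_k -> {set T}) (theta : R) : Prop :=
  let n : R := #|T|%:R in
  [/\ 0 < eps < 1, 0 < delta <= 1, 0 < beta,
      (forall v : T, delta * n <= (degU e v setT)%:R) &
      [/\ (forall i j : 'I_k, i != j -> [disjoint P i & P j]),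
      (forall v : T, exists i : 'I_k, v \in P i),
      powR eps (11 * powR 2 (2 / delta)) <= theta <= eps,
      k%:R <= 2 / delta &
      forall i : 'I_k,
        [/\ delta * n / 2 <= #|P i|%:R,
            spectral_gap_ge e (P i)
              (delta ^+ 15 * theta * beta / (2 ^+ 31 * n ^+ 2)),
            (forall v, v \in P i -> delta ^+ 4 * n / 40 <= (degU e v (P i))%:R) &
            (cut_size e (P i))%:R <= eps ^+ 9 * theta ^+ 2 * beta]]].

(* Pr_v(A(X_0,...,X_L)) for the simple random walk X on G started at v:
   sum over all vertex sequences f_0 = v, f_1, ..., f_L of the product of
   transition probabilities P(f_j, f_{j+1}) = 1{f_j ~ f_{j+1}}/deg(f_j),
   times the indicator of the event A (which may only inspect X_0..X_L). *)
Definition walk_prob (R : realType) (T : finType) (e : rel T) (L : nat)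
  (v : T) (A : (nat -> T) -> bool) : R :=
  \sum_(f : {ffun 'I_L.+1 -> T} | f ord0 == v)
    ((\prod_(j < L) ((e (f (inord j)) (f (inord j.+1)))%:R
                      / (degU e (f (inord j)) setT)%:R))
     * (A (fun j => f (inord j)))%:R).

Arguments walk_prob {R T} e L v A.
Arguments spectral_gap_ge {R T} e U g.
Arguments good_decomposition {R T} e eps delta beta {k} P theta.

From HB Require Import structures.
From mathcomp Require Import all_boot all_order all_algebra.
From mathcomp Require Import reals exp.
From mathcomp Require Import lra ring.
Set Implicit Arguments.
Unset Strict Implicit.
Unset Printing Implicit Defensive.
Import Order.TTheory GRing.Theory Num.Theory.
Local Open Scope ring_scope.

(* Every
   transition probability is at most 1/(delta n), so after one step the walk
   has density at most 1/(delta n); for t >= 1 an exit at time t thus has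
   probability at most |E(V_i, V \ V_i)| / (delta n)^2 <= eps^9 theta^2 n^(3/2)
   / (delta n)^2, and a union bound over the C sqrt n times gives the first
   claim.  For the second, V_i' is the set of vertices of V_i with at most
   4 |E(V_i, V \ V_i)| / (delta n) neighbours outside V_i: by Markov's
   inequality it misses at most delta n / 4 of the at least delta n / 2
   vertices of V_i, and from such a start an exit at time 0 is no likelier
   than one at a later time. *)

Lemma inord0 n : inord 0 = ord0 :> 'I_n.+1.
Proof. exact/val_inj/inordK. Qed.

Lemma inord_max n : inord n = ord_max :> 'I_n.+1.
Proof. exact/val_inj/inordK. Qed.

Section PathExtension.
Variables (T : finType) (L : nat).

Definition ffun_rcons (g : {ffun 'I_L.+1 -> T}) (x : T) : {ffun 'I_L.+2 -> T} :=
  [ffun j : 'I_L.+2 => if (j < L.+1)%N then g (inord j) else x].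

Lemma ffun_rcons_lt g x (j : nat) :
  (j < L.+1)%N -> ffun_rcons g x (inord j) = g (inord j).
Proof. by move=> ltjL; rewrite ffunE inordK ?ltjL // (ltn_trans ltjL). Qed.

Lemma ffun_rcons_last g x : ffun_rcons g x ord_max = x.
Proof. by rewrite ffunE ltnn. Qed.

Lemma ffun_rcons0 g x : ffun_rcons g x ord0 = g ord0.
Proof. by rewrite -!inord0 ffun_rcons_lt. Qed.

Lemma bij_ffun_rcons :
  bijective (fun p : {ffun 'I_L.+1 -> T} * T => ffun_rcons p.1 p.2).
Proof.
exists (fun f : {ffun 'I_L.+2 -> T} => ([ffun j : 'I_L.+1 => f (inord j)], f ord_max)).
  case=> g x /=; congr pair; last exact: ffun_rcons_last.
  by apply/ffunP=> j; rewrite ffunE ffun_rcons_lt // inord_val.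
move=> f; apply/ffunP=> j; rewrite ffunE; case: ltnP => [ltjL|leLj].
  by rewrite ffunE; congr (f _); apply/val_inj; rewrite /= !inordK.
by congr (f _); apply/val_inj/eqP; rewrite /= eqn_leq leLj -ltnS ltn_ord.
Qed.

Lemma big_ffun_rcons (R : Type) (idx : R) (op : Monoid.com_law idx)
    (F : {ffun 'I_L.+2 -> T} -> R) :
  \big[op/idx]_f F f = \big[op/idx]_g \big[op/idx]_x F (ffun_rcons g x).
Proof. by rewrite pair_bigA (reindex _ (onW_bij _ bij_ffun_rcons)). Qed.

End PathExtension.

Definition exits_at (T : finType) (A : {set T}) (X : nat -> T) (t : nat) : bool :=
  (X t \in A) && (X t.+1 \notin A).

Lemma exists_exit_le_sum (R : numDomainType) (T : finType) (A : {set T})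
    (X : nat -> T) m :
  ([exists t : 'I_m.+1, [&& (1 <= t)%N, X t \in A & X t.+1 \notin A]]%:R : R)
  <= \sum_(j < m) (exits_at A X j.+1)%:R.
Proof.
case: existsP => [[[[|t] lttm] /and3P[//= _ Xt Xt1]]|_].
  by rewrite (bigD1 (Ordinal (lttm : (t < m)%N))) //= /exits_at Xt Xt1 lerDl sumr_ge0.
by rewrite /= mulr0n sumr_ge0.
Qed.

Lemma first_exit (T : finType) (A : {set T}) (X : nat -> T) m t :
  (t <= m)%N -> X 0%N \in A -> X t \notin A -> [exists j : 'I_m, exits_at A X j].
Proof.
elim: t => [|t IH] letm X0 Xt; first by rewrite X0 in Xt.
case Xt': (X t \in A); last by apply: IH; rewrite ?Xt' // ltnW.
by apply/existsP; exists (Ordinal letm); rewrite /exits_at Xt' Xt.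
Qed.

Lemma one_sub_exits_le_stay (R : realDomainType) (T : finType) (A : {set T})
    (X : nat -> T) m :
  X 0%N \in A ->
  1 - \sum_(j < m) (exits_at A X j)%:R <= ([forall t : 'I_m.+1, X t \in A]%:R : R).
Proof.
move=> X0; case: (boolP [forall t : 'I_m.+1, X t \in A]) => [_|].
  by rewrite /= mulr1n gerBl sumr_ge0.
rewrite negb_forall => /existsP[t Xt] /=; rewrite mulr0n.
have /existsP[j exit_j] := first_exit (m := m) (ltn_ord t) X0 Xt.
by rewrite (bigD1 j) //= exit_j mulr1n opprD addrA subrr sub0r oppr_le0 sumr_ge0.
Qed.

Lemma card_markov (R : realFieldType) (T : finType) (f : T -> R) (a : R) :
  0 <= a -> (forall z, 0 <= f z) ->
  #|[set z | \sum_y f y < a * f z]|%:R <= a.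
Proof.
move=> a_ge0 f_ge0; set S := [set z | _].
have [->|[z0 z0S]] := set_0Vmem S; first by rewrite cards0.
have sumS_lt : #|S|%:R * \sum_y f y < a * \sum_(z in S) f z.
  rewrite mulr_natl -sumr_const mulr_sumr ltr_sum //; last by move=> z; rewrite inE.
  by apply/hasP; exists z0; rewrite ?mem_index_enum.
have sumS_le : \sum_(z in S) f z <= \sum_y f y.
  by rewrite [leRHS](bigID (mem S)) /= lerDl sumr_ge0.
have sum_ge0 : 0 <= \sum_y f y by rewrite sumr_ge0.
nra.
Qed.

Section Boundary.
Variables (T : finType) (e : rel T) (A : {set T}).

Definition exit_deg (z : T) : nat := (z \in A) * degU e z (~: A).

Lemma cut_size_sum : cut_size e A = (\sum_z exit_deg z)%N.
Proof.
rewrite /cut_size -sum1dep_card.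
rewrite -(pair_big_dep (fun z => z \in A) (fun z x => (x \notin A) && e z x)
  (fun _ _ => 1%N)) /=.
rewrite big_mkcond; apply: eq_bigr => z _; rewrite /exit_deg /degU -sum1dep_card.
by case: (z \in A); rewrite ?mul1n ?mul0n //; apply: eq_bigl => x; rewrite inE.
Qed.

Definition core (R : numDomainType) (D : R) : {set T} :=
  [set z in A | D * (exit_deg z)%:R <= 4 * (cut_size e A)%:R].

Lemma core_sub (R : numDomainType) (D : R) : core D \subset A.
Proof. by apply/subsetP => z; rewrite inE => /andP[]. Qed.

Lemma card_core (R : realFieldType) (D : R) :
  0 <= D -> #|A|%:R - D / 4 <= #|core D|%:R.
Proof.
move=> D_ge0.
have markov := card_markov (f := fun z => (exit_deg z)%:R : R)
  (divr_ge0 D_ge0 (ler0n _ 4)) (fun z => ler0n _ _).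
rewrite -natr_sum -cut_size_sum in markov.
have diff_sub :
    A :\: core D \subset [set z | (cut_size e A)%:R < D / 4 * (exit_deg z)%:R].
  apply/subsetP => z; rewrite !inE => /andP[]; case: (z \in A) => //= not_core _.
  by rewrite -ltNge in not_core; rewrite mulrAC ltr_pdivlMr // mulrC.
have card_split : #|A|%:R = #|core D|%:R + #|A :\: core D|%:R :> R.
  by rewrite -natrD -(cardsID (core D) A) (setIidPr (core_sub D)).
have := subset_leq_card diff_sub; rewrite -(ler_nat R) => card_diff.
lra.
Qed.

Lemma card_core_ge (R : realFieldType) (delta n : R) :
  0 < delta <= 1 -> 0 <= n -> delta * n / 2 <= #|A|%:R ->
  delta ^+ 4 * n / 80 <= #|core (delta * n)|%:R.
Proof.
move=> /andP[delta_gt0 delta_le1] n_ge0 card_ge.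
have Dn_ge0 : 0 <= delta * n by rewrite mulr_ge0 // ltW.
have delta4_le : delta ^+ 4 * n <= delta * n.
  by rewrite ler_wpM2r // -[leRHS]expr1 ler_wiXn2l // ltW.
have := card_core Dn_ge0; lra.
Qed.

End Boundary.

Lemma ler_sum_ord_const (R : numDomainType) m (F : 'I_m -> R) (b : R) :
  (forall j, F j <= b) -> \sum_(j < m) F j <= m%:R * b.
Proof.
move=> le_b; apply: le_trans (ler_sum _ (fun j _ => le_b j)) _.
by rewrite sumr_const card_ord mulr_natl.
Qed.

Section RandomWalk.
Variables (R : realFieldType) (T : finType) (e : rel T).
Local Notation deg u := (degU e u setT).

Definition step_prob (u x : T) : R := (e u x)%:R / (deg u)%:R.

Definition path_weight L (f : {ffun 'I_L.+1 -> T}) : R :=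
  \prod_(j < L) step_prob (f (inord j)) (f (inord j.+1)).

Definition walk_mean L (v : T) (H : {ffun 'I_L.+1 -> T} -> R) : R :=
  \sum_(f : {ffun 'I_L.+1 -> T} | f ord0 == v) path_weight f * H f.
Arguments walk_mean : clear implicits.

Lemma step_prob_ge0 u x : 0 <= step_prob u x.
Proof. exact: divr_ge0. Qed.

Lemma path_weight_ge0 L (f : {ffun 'I_L.+1 -> T}) : 0 <= path_weight f.
Proof. by apply: prodr_ge0 => j _; apply: step_prob_ge0. Qed.

Lemma sum_step_prob u (U : {set T}) :
  \sum_(x in U) step_prob u x = (degU e u U)%:R / (deg u)%:R.
Proof.
rewrite -mulr_suml -natr_sum [degU e u U]/degU -sum1dep_card big_mkcondr /=.
by congr (_%:R / _); apply: eq_bigr => x _; case: (e u x).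
Qed.

Lemma path_weight_rcons L (g : {ffun 'I_L.+1 -> T}) x :
  path_weight (ffun_rcons g x) = path_weight g * step_prob (g ord_max) x.
Proof.
rewrite /path_weight big_ord_recr /=; congr (_ * _).
  apply: eq_bigr => j _.
  by move: (ltn_ord j) => ltjL; rewrite !ffun_rcons_lt // ltnW.
by rewrite ffun_rcons_lt // !inord_max ffun_rcons_last.
Qed.

Lemma walk_mean0 v (H : {ffun 'I_1 -> T} -> R) : walk_mean 0%N v H = H [ffun=> v].
Proof.
rewrite /walk_mean (big_pred1 [ffun=> v]) /path_weight ?big_ord0 ?mul1r // => f.
apply/eqP/eqP => [<-|->]; last by rewrite ffunE.
by apply/ffunP => j; rewrite ffunE ord1.
Qed.

Lemma walk_meanS L v (H : {ffun 'I_L.+2 -> T} -> R) :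
  walk_mean L.+1 v H =
  walk_mean L v (fun g => \sum_x step_prob (g ord_max) x * H (ffun_rcons g x)).
Proof.
rewrite /walk_mean big_mkcond big_ffun_rcons [RHS]big_mkcond /=.
apply: eq_bigr => g _; under eq_bigr do rewrite ffun_rcons0.
case: eqP => _; last by rewrite big1.
by rewrite mulr_sumr; apply: eq_bigr => x _; rewrite path_weight_rcons mulrA.
Qed.

Lemma eq_walk_mean L (v : T) (H1 H2 : {ffun 'I_L.+1 -> T} -> R) :
  (forall f : {ffun 'I_L.+1 -> T}, f ord0 = v -> H1 f = H2 f) ->
  walk_mean L v H1 = walk_mean L v H2.
Proof. by move=> eqH; apply: eq_bigr => f /eqP f0; rewrite eqH. Qed.

Lemma ler_walk_mean L (v : T) (H1 H2 : {ffun 'I_L.+1 -> T} -> R) :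
  (forall f : {ffun 'I_L.+1 -> T}, f ord0 = v -> H1 f <= H2 f) ->
  walk_mean L v H1 <= walk_mean L v H2.
Proof.
by move=> leH; apply: ler_sum => f /eqP f0; rewrite ler_wpM2l ?path_weight_ge0 ?leH.
Qed.

Lemma walk_meanB L (v : T) (H1 H2 : {ffun 'I_L.+1 -> T} -> R) :
  walk_mean L v (fun f => H1 f - H2 f) = walk_mean L v H1 - walk_mean L v H2.
Proof. by rewrite /walk_mean -sumrB; apply: eq_bigr => f _; rewrite mulrBr. Qed.

Lemma walk_mean_sum L v n (H : 'I_n -> {ffun 'I_L.+1 -> T} -> R) :
  walk_mean L v (fun f => \sum_(i < n) H i f) = \sum_(i < n) walk_mean L v (H i).
Proof. by rewrite /walk_mean exchange_big; apply: eq_bigr => f _; rewrite mulr_sumr. Qed.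

Section PositiveDegrees.
Hypothesis deg_gt0 : forall u, (0 < deg u)%N.

Lemma sum_step_prob_setT u : \sum_x step_prob u x = 1.
Proof.
have := sum_step_prob u setT; under eq_bigl do rewrite inE.
by move=> ->; rewrite divff // pnatr_eq0 -lt0n.
Qed.

Lemma walk_mean_cst L v c : walk_mean L v (fun _ => c) = c.
Proof.
elim: L => [|L IH]; first by rewrite walk_mean0.
rewrite walk_meanS -[RHS]IH; apply: eq_walk_mean => g _.
by rewrite -mulr_suml sum_step_prob_setT mul1r.
Qed.

Lemma walk_mean_pair L t v (G : T -> T -> R) : (t < L)%N ->
  walk_mean L v (fun f => G (f (inord t)) (f (inord t.+1))) =
  walk_mean t v (fun g => \sum_x step_prob (g ord_max) x * G (g ord_max) x).
Proof.
elim: L => [//|L IH]; rewrite ltnS leq_eqVlt => /orP[/eqP ->|lttL].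
  rewrite walk_meanS; apply: eq_walk_mean => g _; apply: eq_bigr => x _.
  by rewrite ffun_rcons_lt // !inord_max ffun_rcons_last.
rewrite -IH // walk_meanS; apply: eq_walk_mean => g _.
have [ltt1 ltt2] : (t < L.+1)%N /\ (t.+1 < L.+1)%N by rewrite ltnS ltnW.
under eq_bigr do rewrite !ffun_rcons_lt //.
by rewrite -mulr_suml sum_step_prob_setT mul1r.
Qed.

Definition exit_prob (A : {set T}) (y : T) : R := (exit_deg e A y)%:R / (deg y)%:R.

Lemma sum_step_prob_exit (A : {set T}) y :
  \sum_x step_prob y x * ((y \in A) && (x \notin A))%:R = exit_prob A y.
Proof.
rewrite /exit_prob /exit_deg; case: (y \in A) => /=.
  rewrite mul1n -sum_step_prob [RHS]big_mkcond; apply: eq_bigr => x _.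
  by rewrite inE; case: (x \in A); rewrite /= ?mulr1n ?mulr0n ?mulr1 ?mulr0.
by rewrite mul0n mul0r big1 // => x _; rewrite mulr0n mulr0.
Qed.

Lemma walk_mean_exit_at (A : {set T}) L t v : (t < L)%N ->
  walk_mean L v (fun f => (exits_at A (fun j => f (inord j)) t)%:R) =
  walk_mean t v (fun g => exit_prob A (g ord_max)).
Proof.
move=> ltL.
rewrite [LHS](walk_mean_pair v (fun y x => ((y \in A) && (x \notin A))%:R)) //.
by apply: eq_walk_mean => g _; rewrite sum_step_prob_exit.
Qed.

Lemma walk_mean_exit0 (A : {set T}) L v : (0 < L)%N ->
  walk_mean L v (fun f => (exits_at A (fun j => f (inord j)) 0)%:R) = exit_prob A v.
Proof. by move=> L_gt0; rewrite walk_mean_exit_at // walk_mean0 ffunE. Qed.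

End PositiveDegrees.

Section MinDegree.
Variable D : R.
Hypotheses (D_gt0 : 0 < D) (D_le_deg : forall u, D <= (deg u)%:R).

Lemma deg_gt0 u : (0 < deg u)%N.
Proof. by rewrite -(ltr0n R); apply: lt_le_trans (D_le_deg u). Qed.

Lemma step_prob_le u x : step_prob u x <= D^-1.
Proof.
have deg_pos : 0 < (deg u)%:R :> R by rewrite ltr0n deg_gt0.
rewrite /step_prob (le_trans (y := (deg u)%:R^-1)) //.
  by rewrite ler_pdivrMr // mulVf ?gt_eqF // lern1 leq_b1.
by rewrite lef_pV2 ?posrE.
Qed.

Lemma walk_mean_last_le s v (F : T -> R) : (forall y, 0 <= F y) ->
  walk_mean s.+1 v (fun g => F (g ord_max)) <= (\sum_y F y) / D.
Proof.
move=> F_ge0; rewrite walk_meanS -[X in _ <= X](walk_mean_cst deg_gt0 s v).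
apply: ler_walk_mean => g _; under eq_bigr do rewrite ffun_rcons_last.
by rewrite mulr_suml ler_sum // => y _; rewrite mulrC ler_wpM2l ?step_prob_le.
Qed.

Lemma exit_prob_le (A : {set T}) y : exit_prob A y <= (exit_deg e A y)%:R / D.
Proof. by rewrite /exit_prob ler_wpM2l // lef_pV2 ?posrE ?ltr0n ?deg_gt0. Qed.

Lemma sum_exit_prob_le (A : {set T}) : \sum_y exit_prob A y <= (cut_size e A)%:R / D.
Proof.
rewrite cut_size_sum natr_sum mulr_suml; apply: ler_sum => y _.
exact: exit_prob_le.
Qed.

Lemma walk_mean_exitS_le (A : {set T}) L t v : (t.+1 < L)%N ->
  walk_mean L v (fun f => (exits_at A (fun j => f (inord j)) t.+1)%:R)
  <= (cut_size e A)%:R / D ^+ 2.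
Proof.
move=> ltL; rewrite (walk_mean_exit_at deg_gt0) //.
apply: le_trans (walk_mean_last_le _ _ _) _; first by move=> y; rewrite divr_ge0.
by rewrite expr2 invfM mulrA ler_wpM2r ?sum_exit_prob_le // invr_ge0 ltW.
Qed.

End MinDegree.
End RandomWalk.

Arguments walk_mean {R T} e L v H.

Lemma walk_probE (R : realType) (T : finType) (e : rel T) L v A :
  walk_prob e L v A = walk_mean e L v (fun f => (A (fun j => f (inord j)))%:R :> R).
Proof. by []. Qed.

Section WalkEvents.
Variables (R : realType) (T : finType) (e : rel T) (A : {set T}) (D : R).
Hypotheses (D_gt0 : 0 < D) (D_le_deg : forall u, D <= (degU e u setT)%:R).

Lemma walk_exit_prob_le m v :
  walk_prob e m.+1 v
    (fun X => [exists t : 'I_m.+1, [&& (1 <= t)%N, X t \in A & X t.+1 \notin A]])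
  <= m%:R * ((cut_size e A)%:R / D ^+ 2).
Proof.
rewrite walk_probE; apply: (@le_trans _ _ (walk_mean e m.+1 v
  (fun f => \sum_(j < m) (exits_at A (fun i => f (inord i)) j.+1)%:R))).
  by apply: ler_walk_mean => f _; apply: exists_exit_le_sum.
rewrite walk_mean_sum; apply: ler_sum_ord_const => j.
by apply: (walk_mean_exitS_le D_gt0 D_le_deg); exact: ltn_ord.
Qed.

Lemma walk_stay_prob_ge m v : v \in core e A D ->
  1 - 4 * (m%:R * ((cut_size e A)%:R / D ^+ 2))
  <= walk_prob e m v (fun X => [forall t : 'I_m.+1, X t \in A]).
Proof.
rewrite inE => /andP[vA v_core]; rewrite walk_probE.
apply: (@le_trans _ _ (walk_mean e m v
  (fun f => 1 - \sum_(j < m) (exits_at A (fun i => f (inord i)) j)%:R))); last first.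
  by apply: ler_walk_mean => f f0; apply: one_sub_exits_le_stay; rewrite inord0 f0.
have deg_pos := deg_gt0 D_gt0 D_le_deg.
have exit_le (j : 'I_m) : walk_mean e m v
    (fun f => (exits_at A (fun i => f (inord i)) j)%:R)
    <= 4 * ((cut_size e A)%:R / D ^+ 2).
  case: j => -[|t] ltjm /=.
    rewrite walk_mean_exit0 //; apply: le_trans (exit_prob_le D_gt0 D_le_deg A v) _.
    have -> : (exit_deg e A v)%:R / D = D * (exit_deg e A v)%:R / D ^+ 2.
      by field; rewrite gt_eqF.
    by rewrite mulrA ler_wpM2r // invr_ge0 exprn_ge0 // ltW.
  apply: le_trans (walk_mean_exitS_le D_gt0 D_le_deg A v ltjm) _.
  by rewrite ler_peMl ?ler1n // divr_ge0 // exprn_ge0 // ltW.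
rewrite walk_meanB walk_mean_cst // walk_mean_sum lerD2l lerN2 mulrCA.
by apply: ler_sum_ord_const.
Qed.

End WalkEvents.

Lemma powR_3half (R : realType) (n : R) : 0 < n -> powR n (3 / 2) = n * Num.sqrt n.
Proof.
move=> n_gt0; have -> : (3 / 2 : R) = 1 + 2^-1 by field.
rewrite powRD ?powRr1 ?powR12_sqrt ?ltW //.
by apply/implyP => _; rewrite gt_eqF.
Qed.

Lemma truncn_mul_cut_le (R : realType) (n C K delta cut : R) :
  0 < n -> 0 < delta -> 0 <= C -> 0 <= cut -> cut <= K * powR n (3 / 2) ->
  (Num.truncn (C * Num.sqrt n))%:R * (cut / (delta * n) ^+ 2) <= C * K / delta ^+ 2.
Proof.
move=> n_gt0 delta_gt0 C_ge0 cut_ge0; rewrite powR_3half // => cut_le.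
set m := (Num.truncn _)%:R.
have m_le : m <= C * Num.sqrt n by rewrite truncn_le mulr_ge0 ?sqrtr_ge0.
have prod_le : m * cut <= C * K * n * Num.sqrt n ^+ 2.
  apply: le_trans (ler_pM (ler0n _ _) cut_ge0 m_le cut_le) _.
  by rewrite le_eqVlt; apply/orP; left; apply/eqP; ring.
rewrite (sqr_sqrtr (ltW n_gt0)) in prod_le.
have -> : C * K / delta ^+ 2 = C * K * n * n / (delta * n) ^+ 2.
  by field; rewrite !gt_eqF.
by rewrite mulrA ler_wpM2r // invr_ge0 exprn_ge0 // mulr_ge0 // ltW.
Qed.

Lemma good_decomposition_cut_le (R : realType) (T : finType) (e : rel T)
    (eps delta theta C : R) k (P : 'I_k -> {set T}) (i : 'I_k) :
  good_decomposition e eps delta (powR (#|T|%:R) (3 / 2)) P theta ->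
  0 < C -> 0 < (#|T|%:R : R) ->
  (Num.truncn (C * Num.sqrt (#|T|%:R)))%:R
    * ((cut_size e (P i))%:R / (delta * #|T|%:R) ^+ 2)
  <= C * theta ^+ 2 * eps ^+ 9 / delta ^+ 2.
Proof.
move=> [_ /andP[delta_gt0 _] _ _ [_ _ _ _ /(_ i)[_ _ _ cut_le]]] C_gt0 n_gt0.
rewrite (_ : C * theta ^+ 2 * eps ^+ 9 = C * (eps ^+ 9 * theta ^+ 2)); last by ring.
exact: truncn_mul_cut_le n_gt0 delta_gt0 (ltW C_gt0) (ler0n _ _) cut_le.
Qed.

Lemma budget_delta6_le (R : realFieldType) (C theta eps delta x : R) :
  0 <= C -> 0 <= eps -> 0 < delta <= 1 ->
  x <= C * theta ^+ 2 * eps ^+ 9 / delta ^+ 2 ->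
  4 * x <= 80 * C * theta ^+ 2 * eps ^+ 9 / delta ^+ 6.
Proof.
move=> C_ge0 eps_ge0 /andP[delta_gt0 delta_le1].
set Y := C * theta ^+ 2 * eps ^+ 9.
have -> : 80 * C * theta ^+ 2 * eps ^+ 9 / delta ^+ 6 = 80 * (Y / delta ^+ 6).
  by rewrite /Y; ring.
have Y_ge0 : 0 <= Y by rewrite mulr_ge0 ?exprn_ge0 // mulr_ge0 ?sqr_ge0.
have Y_le : Y / delta ^+ 2 <= Y / delta ^+ 6.
  by rewrite ler_wpM2l // lef_pV2 ?posrE ?exprn_gt0 // ler_wiXn2l // ltW.
have : 0 <= Y / delta ^+ 2 by rewrite divr_ge0 ?exprn_ge0 // ltW.
lra.
Qed.

Theorem lemma3p5 (R : realType) (T : finType) (e : rel T) (delta eps : R)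
  (k : nat) (P : 'I_k -> {set T}) (theta : R) :
  simple_graph e -> 0 < delta <= 1 -> 0 < eps ->
  (forall v : T, delta * #|T|%:R <= (degU e v setT)%:R) ->
  good_decomposition e eps delta (powR (#|T|%:R) (3 / 2)) P theta ->
  (forall C : R, 0 < C -> forall (i : 'I_k) (v : T),
     let m := Num.truncn (C * Num.sqrt (#|T|%:R)) in
     walk_prob e m.+1 v
       (fun X => [exists t : 'I_m.+1,
                    [&& (1 <= t)%N, X t \in P i & X t.+1 \notin P i]])
     <= C * theta ^+ 2 * eps ^+ 9 / delta ^+ 2)
  /\
  (forall C : R, 0 < C -> forall i : 'I_k,
     let m := Num.truncn (C * Num.sqrt (#|T|%:R)) in
     exists V' : {set T},
       [/\ V' \subset P i,
           delta ^+ 4 * #|T|%:R / 80 <= #|V'|%:R &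
           forall v : T, v \in V' ->
             1 - 80 * C * theta ^+ 2 * eps ^+ 9 / delta ^+ 6
               <= walk_prob e m v (fun X => [forall t : 'I_m.+1, X t \in P i])]).
Proof.
move=> _ delta_01 eps_gt0 deg_ge decP; have [_ _ _ _ [_ _ _ _ partP]] := decP.
have /andP[delta_gt0 _] := delta_01.
set n : R := #|T|%:R.
have n_gt0 (v : T) : 0 < n by rewrite ltr0n; apply/card_gt0P; exists v.
split=> [C C_gt0 i v | C C_gt0 i]; cbv zeta.
  apply: le_trans (good_decomposition_cut_le i decP C_gt0 (n_gt0 v)).
  exact: walk_exit_prob_le (mulr_gt0 delta_gt0 (n_gt0 v)) deg_ge _ _.
exists (core e (P i) (delta * n)); split; first exact: core_sub.
  have [card_ge _ _ _] := partP i.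
  exact: card_core_ge.
move=> v v_core.
apply: le_trans (walk_stay_prob_ge (mulr_gt0 delta_gt0 (n_gt0 v)) deg_ge _ v_core).
rewrite lerD2l lerN2; apply: budget_delta6_le (ltW C_gt0) (ltW eps_gt0) delta_01 _.
exact: good_decomposition_cut_le i decP C_gt0 (n_gt0 v).
Qed.
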